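(* Let $x,k,r$ be positive integers with $x>1$, and let $p$ be a prime, such that $x^3 + (x+1)^3 + \cdots + (x+k-1)^3 = p^{2r}$. If $k$ is even, then $2x+k-1 = p^t$ for some integer $t$ with $0<t<2r$. If $k$ is odd, then $2x+k-1 = 2p^t$ for some integer $t$ with $0<t<2r$. *)

From mathcomp Require Import all_boot.

From mathcomp Require Import all_boot.
From mathcomp Require Import ring zify.

(* Write m := 2x + k - 1.  Then 8 (x^3 + ... + (x+k-1)^3) = k m (m^2 + k^2 - 1).
   For even k, m is odd, so m divides p^(2r); for odd k, m = 2n and the sum
   itself is k n (n^2 + (k^2-1)/4), so n divides p^(2r).  Either way the
   divisor exceeds 1 and its cofactor exceeds 1, hence it is a power p^t with
   0 < t < 2r. *)

Lemma sum_cubes_from x j :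
  8 * \sum_(0 <= i < j.+1) (x + i) ^ 3 =
  j.+1 * (2 * x + j) * ((2 * x + j) ^ 2 + j * (j + 2)).
Proof.
elim: j => [|j IH]; first by rewrite big_nat1; ring.
by rewrite big_nat_recr //= mulnDr IH; ring.
Qed.

Lemma sum_cubes_from_odd x l :
  \sum_(0 <= i < (2 * l).+1) (x + i) ^ 3 =
  (2 * l).+1 * (x + l) * ((x + l) ^ 2 + l * (l + 1)).
Proof.
apply/eqP; rewrite -(eqn_pmul2l (_ : 0 < 8)) // sum_cubes_from; apply/eqP; ring.
Qed.

Lemma proper_dvdn_pfactor p e m :
  prime p -> 1 < m -> m %| p ^ e -> m < p ^ e -> exists2 t, 0 < t < e & m = p ^ t.
Proof.
move=> p_pr m_gt1 m_dvd m_lt; have [t t_le m_eq] := dvdn_pfactor _ _ p_pr m_dvd.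
exists t => //; apply/andP; split.
- by case: t {t_le} m_eq => // m_eq; rewrite m_eq in m_gt1.
- by rewrite ltn_neqAle t_le andbT; apply: contraTneq m_lt => <-; rewrite m_eq ltnn.
Qed.

Lemma sum_cubes_even_count_pfactor {x j p e} :
  prime p -> 0 < x -> odd j -> \sum_(0 <= i < j.+1) (x + i) ^ 3 = p ^ e ->
  exists2 t, 0 < t < e & 2 * x + j = p ^ t.
Proof.
move=> p_pr x_gt0 j_odd sum_eq; set m := 2 * x + j.
have m_odd : odd m by rewrite oddD oddM j_odd.
have m_gt1 : 1 < m by rewrite /m; lia.
have sum8 := sum_cubes_from x j; rewrite sum_eq -/m in sum8.
set Q := m ^ 2 + j * (j + 2) in sum8.
have Q_ge9 : 9 <= Q.
  apply: leq_trans (leq_addr _ _); rewrite (_ : 9 = 3 ^ 2) // leq_exp2r //; lia.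
apply: proper_dvdn_pfactor => //.
- rewrite -(@Gauss_dvdr _ 8); last by rewrite (_ : 8 = 2 ^ 3) // coprimeXr // coprimen2 m_odd.
  by rewrite sum8 dvdn_mulr // dvdn_mull.
- have cof_ge9 : 9 <= j.+1 * Q by apply: leq_trans Q_ge9 (leq_pmull _ _).
  rewrite -(ltn_pmul2l (_ : 0 < 8)) // sum8 mulnAC.
  by rewrite ltn_pmul2r ?(ltnW m_gt1).
Qed.

Lemma sum_cubes_odd_count_pfactor {x l p e} :
  prime p -> 1 < x -> \sum_(0 <= i < (2 * l).+1) (x + i) ^ 3 = p ^ e ->
  exists2 t, 0 < t < e & x + l = p ^ t.
Proof.
move=> p_pr x_gt1; rewrite sum_cubes_from_odd => sum_eq.
set n := x + l in sum_eq *; set Q := n ^ 2 + l * (l + 1) in sum_eq.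
have n_gt1 : 1 < n by rewrite /n; lia.
have Q_gt1 : 1 < Q.
  by apply: leq_trans (leq_addr _ _); rewrite (_ : 1 = 1 ^ 2) // ltn_exp2r.
apply: proper_dvdn_pfactor => //.
- by rewrite -sum_eq dvdn_mulr // dvdn_mull.
- rewrite -sum_eq mulnAC -[X in X < _]mul1n ltn_pmul2r ?(ltnW n_gt1) //.
  exact: leq_trans Q_gt1 (leq_pmull _ _).
Qed.

Theorem mainTheorem3 (x k r p : nat) :
  1 < x -> 0 < k -> 0 < r -> prime p ->
  \sum_(0 <= i < k) (x + i) ^ 3 = p ^ (2 * r) ->
  (~~ odd k -> exists t : nat, 0 < t < 2 * r /\ 2 * x + k - 1 = p ^ t) /\
  (odd k -> exists t : nat, 0 < t < 2 * r /\ 2 * x + k - 1 = 2 * p ^ t).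
Proof.
move=> x_gt1; case: k => [//|j] _ _ p_pr sum_eq.
rewrite (_ : 2 * x + j.+1 - 1 = 2 * x + j); last by lia.
split=> /= k_par.
- have j_odd : odd j by move: k_par; rewrite negbK.
  have [t t_bd m_eq] := sum_cubes_even_count_pfactor p_pr (ltnW x_gt1) j_odd sum_eq.
  by exists t.
- have j_eq : j = 2 * j./2 by rewrite -[LHS]odd_double_half (negbTE k_par) -muln2 mulnC.
  rewrite j_eq in sum_eq *.
  have [t t_bd n_eq] := sum_cubes_odd_count_pfactor p_pr x_gt1 sum_eq.
  by exists t; rewrite -n_eq mulnDr.
Qed.
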